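(* Let $d\ge 3$ be an integer and let $(x,y)$ be an integer solution of \[ d(2x+d+1)\left(x^2+(d+1)x+\frac{d(d+1)}{2}\right)=2y^3 . \] Then there are integers $y_1,y_2$ and a pair $(\alpha,\beta)\in\mathcal{A}_d^{(3)}$ such that \[ 2x+d+1=\alpha y_1^3,\qquad x^2+(d+1)x+\frac{d(d+1)}{2}=\beta y_2^3 . \]
   Context: For an integer $m$, $[m]\in\{0,1,2\}$ denotes the residue with $m\equiv[m]\pmod 3$. For a prime $q$ let $\mu_q=\operatorname{ord}_q(d^2-1)$ and $\nu_q=\operatorname{ord}_q(d)$. To each prime $q$ associate a set $T_q\subseteq\{0,1,2\}^2$: if $q\nmid d(d^2-1)$, $T_q=\{(0,0)\}$. For $q=2$: $T_2=\{(0,[1-\nu_2])\}$ if $2\mid d$; $T_2=\{(1,0),(0,1),(2,2)\}$ if $2\nmid d$ and $\mu_2\ge 4$; $T_2=\{(1,0),(0,1)\}$ if $2\nmid d$ and $\mu_2=3$. For odd $q\mid d$: $T_q=\{([-\nu_q],0),(0,[-\nu_q])\}$. For odd $q\mid d^2-1$: $T_q=\{(0,0),(1,2),(2,1)\}$ if $\mu_q\ge 2$, and $T_q=\{(0,0),(2,1)\}$ if $\mu_q=1$. Then $\mathcal{A}_d^{(3)}$ is the set of pairs of positive integers $(\alpha,\beta)$ with $(\operatorname{ord}_q(\alpha),\operatorname{ord}_q(\beta))\in T_q$ for every prime $q$. *)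

From mathcomp Require Import all_boot all_order all_algebra.
Set Implicit Arguments. Unset Strict Implicit. Unset Printing Implicit Defensive.
Import Order.TTheory GRing.Theory Num.Theory.

Definition res3 (m : int) : nat := absz (m %% 3)%Z.

(* mu_q = ord_q(d^2 - 1), nu_q = ord_q(d)  (d >= 3, so d^2-1 > 0) *)
Definition mu (d q : nat) : nat := logn q (d ^ 2 - 1).
Definition nu (d q : nat) : nat := logn q d.

Definition Tq (d q : nat) : seq (nat * nat) :=
  if ~~ (q %| d * (d ^ 2 - 1)) then [:: (0, 0)]
  else if q == 2 then
    (if 2 %| d then [:: (0, res3 (1 - (nu d 2)%:Z))]
     else if 4 <= mu d 2 then [:: (1, 0); (0, 1); (2, 2)]
     else if mu d 2 == 3 then [:: (1, 0); (0, 1)]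
     else [::] (* impossible: d odd forces 8 | d^2-1 *))
  else if q %| d then [:: (res3 (- (nu d q)%:Z), 0); (0, res3 (- (nu d q)%:Z))]
  else (* odd q dividing d^2-1 *)
    if 2 <= mu d q then [:: (0, 0); (1, 2); (2, 1)]
    else [:: (0, 0); (2, 1)].

Definition in_A3 (d alpha beta : nat) : Prop :=
  0 < alpha /\ 0 < beta /\
  forall q : nat, prime q -> (logn q alpha, logn q beta) \in Tq d q.

From mathcomp Require Import all_boot all_order all_algebra.
From mathcomp Require Import zify ring.

(* With u = 2x + d + 1 and v = x^2 + (d+1)x + d(d+1)/2 one has
   4v = u^2 + (d^2 - 1) and d u v = 2 y^3.  Write u = alpha y1^3 and
   v = beta y2^3 with alpha, beta cube-free.  For each prime q the equation
   d u v = 2 y^3 fixes ord_q(d) + ord_q(alpha) + ord_q(beta) modulo 3, and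
   4v = u^2 + (d^2 - 1) forbids q from dividing both u and v unless
   q | d^2 - 1, forces u odd when d is even, and keeps ord_q(v) < 2 when
   q^2 (resp. 16 for q = 2) does not divide d^2 - 1.  These constraints leave exactly the
   pairs of T_q.  When u = 0, y1 = 0 and alpha is chosen with
   ord_q(alpha) = ord_q(2 d^2 beta^2) mod 3 to keep the same congruence. *)

Lemma logn_ndvd {q n : nat} : ~~ (q %| n) -> logn q n = 0.
Proof. by move=> qNn; rewrite lognE (negbTE qNn) !andbF. Qed.

Lemma logn_mod3_neq2 q n : prime q -> 0 < n -> ~~ (q ^ 2 %| n) ->
  logn q n %% 3 != 2.
Proof. by move=> q_pr n_pos; rewrite pfactor_dvdn // -ltnNge; case: logn => [|[|]]. Qed.

Lemma cubefree_factorization n : 0 < n ->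
  exists a c, [/\ 0 < a, n = a * c ^ 3 &
    forall p, prime p -> logn p a = logn p n %% 3].
Proof.
move=> n_pos.
suff [a [c [a_pos c_pos -> a_small]]] : exists a c,
    [/\ 0 < a, 0 < c, n = a * c ^ 3 & forall p, prime p -> logn p a < 3].
  exists a, c; split=> // p p_pr.
  have := a_small p p_pr; rewrite lognM ?expn_gt0 ?c_pos // lognX; lia.
elim/ltn_ind: n n_pos => n IHn n_pos.
have [/allP small | /allPn [p p_n big]] := boolP (all (fun p => logn p n < 3) (primes n)).
  exists n, 1; split=> //; first by rewrite exp1n muln1.
  move=> p _; case: (posnP (logn p n)) => [-> // | ].
  by rewrite logn_gt0 => /small.
have p_pr : prime p by move: p_n; rewrite mem_primes => /andP [].
have /dvdnP [m def_n] : p ^ 3 %| n by rewrite pfactor_dvdn // leqNgt.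
have m_pos : 0 < m by move: n_pos; rewrite def_n muln_gt0 => /andP [].
have m_lt_n : m < n.
  by rewrite def_n -[X in X < _]muln1 ltn_pmul2l // -(exp1n 3) ltn_exp2r // prime_gt1.
have [a [c [a_pos c_pos def_m a_small]]] := IHn m m_lt_n m_pos.
exists a, (c * p); split=> //; first by rewrite muln_gt0 c_pos prime_gt0.
by rewrite def_n def_m expnMn mulnA.
Qed.

Lemma dvd8_sqr_sub1 d : odd d -> 8 %| d ^ 2 - 1.
Proof.
move=> d_odd; have := odd_double_half d; rewrite d_odd => def_d.
have /dvdnP [m def_m] : 2 %| d./2 * d./2.+1.
  by rewrite dvdn2 oddM /= andbN.
apply/dvdnP; exists m; rewrite -def_d; move: def_m; rewrite -!muln2; lia.
Qed.

Lemma sqr_add_8odd_ndvd16 u t : odd t -> ~~ (16 %| u ^ 2 + 8 * t).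
Proof.
move=> t_odd; have -> : 8 * t = 8 + t./2 * 16.
  by move: (odd_double_half t); rewrite t_odd -muln2; lia.
rewrite /dvdn addnA -modnDmr modnMl addn0 -modnDml -modnXm modnDml.
have : u %% 16 < 16 by rewrite ltn_pmod.
by move: (u %% 16); do 17?case.
Qed.

Lemma res3_opp n : res3 (- n%:Z) = (2 * n) %% 3.
Proof. rewrite /res3; lia. Qed.

Lemma res3_1sub n : res3 (1 - n%:Z) = (1 + 2 * n) %% 3.
Proof. rewrite /res3; lia. Qed.

Lemma mem_residues_sum1 r s : r < 3 -> s < 3 -> (r + s) %% 3 = 1 ->
  (r, s) \in [:: (1, 0); (0, 1); (2, 2)].
Proof. by case: r => [|[|[|r]]] //; case: s => [|[|[|s]]]. Qed.

Lemma mem_residues_sum1_neq2 r s : r < 3 -> s < 3 -> (r + s) %% 3 = 1 ->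
  s != 2 -> (r, s) \in [:: (1, 0); (0, 1)].
Proof. by case: r => [|[|[|r]]] //; case: s => [|[|[|s]]]. Qed.

Lemma mem_residues_sum0 r s : r < 3 -> s < 3 -> (r + s) %% 3 = 0 ->
  (r, s) \in [:: (0, 0); (1, 2); (2, 1)].
Proof. by case: r => [|[|[|r]]] //; case: s => [|[|[|s]]]. Qed.

Lemma mem_residues_sum0_neq2 r s : r < 3 -> s < 3 -> (r + s) %% 3 = 0 ->
  s != 2 -> (r, s) \in [:: (0, 0); (2, 1)].
Proof. by case: r => [|[|[|r]]] //; case: s => [|[|[|s]]]. Qed.

Lemma residues_in_Tq d q r s : 3 <= d -> prime q -> r < 3 -> s < 3 ->
  (logn q d + r + s) %% 3 = (q == 2) %% 3 ->
  (~~ (q %| d ^ 2 - 1) -> r = 0 \/ s = 0) ->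
  (q = 2 -> ~~ odd d -> r = 0) ->
  (q = 2 -> odd d -> mu d 2 < 4 -> s != 2) ->
  (q %| d ^ 2 - 1 -> mu d q < 2 -> s != 2) ->
  (r, s) \in Tq d q.
Proof.
move=> d_ge3 q_pr r_lt3 s_lt3 sum_rs split_rs even_r two_s q_s.
have X_pos : 0 < d ^ 2 - 1 by rewrite subn_gt0; nia.
have coprime_dX : q %| d -> ~~ (q %| d ^ 2 - 1).
  move=> q_d; apply/negP => q_X.
  have : q %| d ^ 2 - (d ^ 2 - 1) by rewrite dvdn_sub // dvdn_exp.
  rewrite subKn; last by lia.
  by rewrite dvdn1 => /eqP q1; rewrite q1 in q_pr.
rewrite /Tq /nu res3_opp res3_1sub.
have [q2 | q_neq2] := eqVneq q 2.
  subst q; have -> /= : 2 %| d * (d ^ 2 - 1).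
    by rewrite dvdn2 oddM oddB ?expn_gt0 ?oddX ?andbN //; lia.
  have [d_odd | d_even] := boolP (odd d); last first.
    rewrite dvdn2 d_even (even_r erefl d_even) /= in sum_rs *.
    rewrite inE xpair_eqE /=; clear -sum_rs s_lt3; lia.
  rewrite dvdn2 d_odd /= logn_ndvd ?dvdn2 ?d_odd // add0n in sum_rs *.
  have mu_ge3 : 3 <= mu d 2 by rewrite /mu -pfactor_dvdn // dvd8_sqr_sub1.
  have [_ | mu_le3] := ltnP 3 (mu d 2); first exact: mem_residues_sum1.
  rewrite (_ : mu d 2 == 3); last by rewrite eqn_leq mu_le3.
  by apply: mem_residues_sum1_neq2; rewrite // two_s // ltnS.
rewrite (negbTE q_neq2) /= in sum_rs *.
case: ifPn => [| /negPn].
  rewrite Euclid_dvdM // negb_or => /andP [q_Nd q_NX].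
  rewrite (logn_ndvd q_Nd) add0n in sum_rs.
  rewrite inE xpair_eqE; have := split_rs q_NX; clear -sum_rs r_lt3 s_lt3; lia.
case: ifPn => [q_d _ | q_Nd].
  have := split_rs (coprime_dX q_d); rewrite !inE !xpair_eqE.
  clear -sum_rs r_lt3 s_lt3; lia.
rewrite Euclid_dvdM // (negbTE q_Nd) /= => q_X.
rewrite (logn_ndvd q_Nd) add0n in sum_rs.
case: ifPn => [_ | ]; first exact: mem_residues_sum0.
by rewrite -ltnNge => /(q_s q_X); apply: mem_residues_sum0_neq2.
Qed.

Section FourVEquation.

Variables d U V : nat.
Hypothesis d_ge3 : 3 <= d.
Hypothesis eqUV : 4 * V = U ^ 2 + (d ^ 2 - 1).

Lemma V_gt0 : 0 < V.
Proof. move: eqUV; have : 8 <= d ^ 2 - 1 by nia. lia. Qed.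

Lemma dvd_sqr_sub1_of_dvdUV q : q %| U -> q %| V -> q %| d ^ 2 - 1.
Proof.
move=> q_U q_V; have : q %| U ^ 2 + (d ^ 2 - 1) by rewrite -eqUV dvdn_mull.
by rewrite dvdn_addr // dvdn_exp.
Qed.

Lemma odd_U_of_even_d : ~~ odd d -> odd U.
Proof.
move=> d_even; have := congr1 odd eqUV.
rewrite oddD oddB ?expn_gt0 ?oddX; last by lia.
by rewrite oddM /= (negbTE d_even); case: (odd U).
Qed.

Lemma logn2_V_mod3 : odd d -> mu d 2 < 4 -> logn 2 V %% 3 != 2.
Proof.
move=> d_odd mu_lt4; apply: logn_mod3_neq2 V_gt0 _ => //.
have X_pos : 0 < d ^ 2 - 1 by rewrite subn_gt0; nia.
have /dvdnP [t def_X] := dvd8_sqr_sub1 _ d_odd.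
have t_odd : odd t.
  apply: contraTT mu_lt4; rewrite -dvdn2 -leqNgt /mu -pfactor_dvdn // def_X.
  by rewrite (expnS 2 3) mulnC => /dvdnP [k ->]; rewrite -mulnA dvdn_mull.
apply/negP => /dvdnP [w def_V].
have := sqr_add_8odd_ndvd16 U _ t_odd.
by rewrite mulnC -def_X -eqUV def_V mulnCA dvdn_mull.
Qed.

Lemma logn_V_mod3 q : prime q -> q %| d ^ 2 - 1 -> mu d q < 2 ->
  logn q V %% 3 != 2.
Proof.
move=> q_pr q_X mu_lt2; apply: logn_mod3_neq2 V_gt0 _ => //.
have X_pos : 0 < d ^ 2 - 1 by rewrite subn_gt0; nia.
apply/negP => q2_V.
have q_U : q %| U.
  have : q %| U ^ 2 + (d ^ 2 - 1).
    by rewrite -eqUV dvdn_mull // (dvdn_trans _ q2_V) // dvdn_exp.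
  by rewrite dvdn_addl // Euclid_dvdX // => /andP [].
have : q ^ 2 %| U ^ 2 + (d ^ 2 - 1) by rewrite -eqUV dvdn_mull.
rewrite dvdn_addr ?dvdn_exp2r // pfactor_dvdn //.
by rewrite leqNgt mu_lt2.
Qed.

Lemma residues_UV_in_Tq Y q : 0 < U -> d * U * V = 2 * Y ^ 3 -> prime q ->
  (logn q U %% 3, logn q V %% 3) \in Tq d q.
Proof.
move=> U_pos eqY q_pr.
have Y_pos : 0 < Y.
  have : 0 < 2 * Y ^ 3 by rewrite -eqY !muln_gt0 U_pos V_gt0 andbT; lia.
  by rewrite muln_gt0 expn_gt0 /= orbF.
have sum_UV : logn q d + logn q U + logn q V = (q == 2) + 3 * logn q Y.
  rewrite -!lognM ?muln_gt0 ?U_pos ?V_gt0 ?andbT //; try lia.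
  by rewrite eqY lognM ?expn_gt0 ?Y_pos // lognX logn_prime.
apply: residues_in_Tq => //; rewrite ?ltn_pmod //.
- lia.
- move=> q_NX; have : ~~ ((q %| U) && (q %| V)).
    by apply: contra q_NX => /andP [] /dvd_sqr_sub1_of_dvdUV; apply.
  by rewrite negb_and => /orP [] /logn_ndvd ->; [left | right].
- by move=> q2 /odd_U_of_even_d U_odd; rewrite q2 logn_ndvd // dvdn2 U_odd.
- by move=> ->; exact: logn2_V_mod3.
- exact: logn_V_mod3.
Qed.

Lemma residues_U0_in_Tq q : U = 0 -> prime q ->
  (logn q (2 * d ^ 2 * V ^ 2) %% 3, logn q V %% 3) \in Tq d q.
Proof.
move=> U0 q_pr.
have d_pos : 0 < d by lia.
have q_NV : ~~ (q %| d ^ 2 - 1) -> ~~ (q %| V).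
  by apply: contra => /(dvd_sqr_sub1_of_dvdUV _); apply; rewrite U0.
apply: residues_in_Tq => //; rewrite ?ltn_pmod //.
- rewrite !lognM ?muln_gt0 ?expn_gt0 ?V_gt0 ?d_pos // (logn_prime _ (isT : prime 2)); lia.
- by move=> /q_NV /logn_ndvd ->; right.
- by move=> _ /odd_U_of_even_d; rewrite U0.
- by move=> ->; exact: logn2_V_mod3.
- exact: logn_V_mod3.
Qed.

End FourVEquation.

Import Order.TTheory GRing.Theory Num.Theory.
Local Open Scope ring_scope.

Lemma four_v_eq (d : nat) (x : int) : (3 <= d)%N ->
  4 * (x ^+ 2 + (d%:Z + 1) * x + ((d * (d + 1)) %/ 2)%N%:Z) =
  (2 * x + d%:Z + 1) ^+ 2 + (d ^ 2 - 1)%N%:Z.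
Proof.
move=> d_ge3.
have half : ((d * (d + 1)) %/ 2)%N%:Z * 2 = d%:Z * (d%:Z + 1).
  by rewrite -[2]/(2%N%:Z) -PoszM divnK ?PoszM // dvdn2 oddM addn1 /= andbN.
rewrite -subzn; last by rewrite expn_gt0; lia.
have -> : (d ^ 2)%N%:Z = d%:Z ^+ 2 by rewrite -!natz natrX.
set h := ((d * (d + 1)) %/ 2)%N%:Z in half *.
have -> : 4 * (x ^+ 2 + (d%:Z + 1) * x + h) =
  4 * x ^+ 2 + 4 * (d%:Z + 1) * x + 2 * (h * 2) by ring.
rewrite half; ring.
Qed.

Lemma int_cubefree_factorization (u : int) : u != 0 ->
  exists (a : nat) (c : int), [/\ (0 < a)%N, u = a%:Z * c ^+ 3 &
    forall p, prime p -> logn p a = (logn p `|u| %% 3)%N].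
Proof.
move=> u_nz; have u_pos : (0 < `|u|)%N by rewrite absz_gt0.
have [a [c [a_pos def_u loga]]] := cubefree_factorization _ u_pos.
exists a, (sgz u * c%:Z); split=> //.
rewrite {1}[u]intEsg def_u exprMn sgz_odd // expr1 PoszM.
have -> : (c ^ 3)%N%:Z = c%:Z ^+ 3 by rewrite -!natz natrX.
ring.
Qed.

Theorem lemma8p1 (d : nat) (x y : int) :
  (3 <= d)%N ->
  (d%:Z * (2 * x + d%:Z + 1) *
     (x ^+ 2 + (d%:Z + 1) * x + ((d * (d + 1)) %/ 2)%N%:Z) = 2 * y ^+ 3) ->
  exists (y1 y2 : int) (alpha beta : nat),
    in_A3 d alpha beta /\
    2 * x + d%:Z + 1 = alpha%:Z * y1 ^+ 3 /\
    x ^+ 2 + (d%:Z + 1) * x + ((d * (d + 1)) %/ 2)%N%:Z = beta%:Z * y2 ^+ 3.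
Proof.
move=> d_ge3; have := four_v_eq d x d_ge3.
set u := 2 * x + d%:Z + 1; set v := x ^+ 2 + _ + _ => eq_uv eq_y.
have eqUV : (4 * `|v| = `|u| ^ 2 + (d ^ 2 - 1))%N.
  have u2 : u ^+ 2 = (`|u| ^ 2)%N%:Z by rewrite -abszX gez0_abs ?sqr_ge0.
  by have := congr1 absz eq_uv; rewrite u2 -PoszD abszM.
have eqY : (d * `|u| * `|v| = 2 * `|y| ^ 3)%N.
  by have := congr1 absz eq_y; rewrite !abszM /= => ->; rewrite !expnS expn0 muln1.
have v_nz : v != 0 by rewrite -absz_gt0; apply: V_gt0 d_ge3 eqUV.
have [beta [y2 [beta_pos def_v logb]]] := int_cubefree_factorization v v_nz.
have [u0 | u_nz] := eqVneq u 0.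
  have [|alpha [_ [alpha_pos _ loga]]] :=
    cubefree_factorization (2 * d ^ 2 * `|v| ^ 2)%N.
    by rewrite !muln_gt0 absz_gt0 v_nz (leq_trans _ d_ge3).
  exists 0, y2, alpha, beta; split; last by rewrite u0 def_v expr0n mulr0.
  split=> //; split=> // q q_pr; rewrite loga // logb //.
  by apply: residues_U0_in_Tq d_ge3 eqUV _ _ q_pr; rewrite u0.
have [alpha [y1 [alpha_pos def_u loga]]] := int_cubefree_factorization u u_nz.
exists y1, y2, alpha, beta; split; last by split.
split=> //; split=> // q q_pr; rewrite loga // logb //.
by apply: residues_UV_in_Tq d_ge3 eqUV _ _ _ eqY q_pr; rewrite absz_gt0.
Qed.
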